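(* Let $n\ge1$ and $\alpha_1,\ldots,\alpha_{2^n}\in\mathbb{R}$. The $n$-qubit diagonal unitary $\mathrm{diag}(e^{i\alpha_1},\ldots,e^{i\alpha_{2^n}})$ can be emulated by an $n$-qutrit circuit, without ancillae, using only qutrit Clifford+$T$ gates and gates $Z(\alpha_j,\alpha_j)$ and $Z(-\alpha_j,-\alpha_j)$ for $j=1,\ldots,2^n$.
   Context: A qutrit is $\mathbb{C}^3$ with computational basis $\ket{0},\ket{1},\ket{2}$; $\omega=e^{2\pi i/3}$. For $a,b\in\mathbb{R}$, $Z(a,b)=\mathrm{diag}(1,\omega^a,\omega^b)$. Qutrit Clifford gates are those generated (up to global phase) by $S=\mathrm{diag}(1,1,\omega)$, the Hadamard $H=\frac{1}{\sqrt3}\begin{pmatrix}1&1&1\\1&\omega&\bar\omega\\1&\bar\omega&\omega\end{pmatrix}$ and $\mathrm{CX}:\ket{i,j}\mapsto\ket{i,(i+j)\bmod3}$; the qutrit $T$ gate is $Z(\tfrac13,-\tfrac13)$. A qutrit unitary $V$ on $n$ qutrits emulates an $n$-qubit unitary $U$ if, identifying the qubit basis states $\ket{x}$, $x\in\{0,1\}^n$, with the qutrit basis states having the same labels, $V\ket{x}=U\ket{x}$ for all $x\in\{0,1\}^n$ (i.e.\ $V$ acts as $U$ on the subspace spanned by $\{\ket{0},\ket{1}\}^{\otimes n}$). The diagonal matrix is written in the standard ordering of the qubit computational basis. *)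

From HB Require Import structures.
From mathcomp Require Import all_boot all_algebra.
From mathcomp Require Import complex.
From mathcomp Require Import reals trigo.

Set Implicit Arguments.
Unset Strict Implicit.
Unset Printing Implicit Defensive.

Import GRing.Theory Num.Theory.
Local Open Scope ring_scope.

Definition expi (R : realType) (t : R) : R[i] := (cos t +i* sin t)%C.

Definition wpow (R : realType) (a : R) : R[i] := expi (2 * pi * a / 3).
Definition omega (R : realType) : R[i] := wpow (1 : R).

(* single-qutrit gates, as 3x3 matrices (row = output, column = input) *)
Definition Zgate (R : realType) (a b : R) : 'M[R[i]]_3 :=
  \matrix_(i, j) (if i == j then
                    (if val i == 0%N then 1 else if val i == 1%N then wpow a else wpow b)
                  else 0).
Definition Sgate (R : realType) : 'M[R[i]]_3 := Zgate 0 1.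
Definition Tgate (R : realType) : 'M[R[i]]_3 := Zgate (1 / 3) (- (1 / 3)).
Definition Hgate (R : realType) : 'M[R[i]]_3 :=
  \matrix_(i, j) (((Num.sqrt (3 : R))^-1)%:C%C * omega R ^+ (i * j)%N).

Definition trits (n : nat) := {ffun 'I_n -> 'I_3}.

(* n-qutrit operators, as matrices indexed by basis states: A x y = <x|A|y> *)
Definition qop (R : realType) (n : nat) := trits n -> trits n -> R[i].

Definition qmul (R : realType) (n : nat) (A B : qop R n) : qop R n :=
  fun x y => \sum_(z : trits n) A x z * B z y.
Definition qid (R : realType) (n : nat) : qop R n := fun x y => (x == y)%:R.

Definition on1 (R : realType) (n : nat) (k : 'I_n) (G : 'M[R[i]]_3) : qop R n :=
  fun x y => if [forall j, (j != k) ==> (x j == y j)] then G (x k) (y k) else 0.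

Definition cxmap (n : nat) (c t : 'I_n) (y : trits n) : trits n :=
  [ffun j => if j == t then (y c + y t)%R else y j].
Definition cxop (R : realType) (n : nat) (c t : 'I_n) : qop R n :=
  fun x y => (x == cxmap c t y)%:R.

Inductive gate (n : nat) : Type :=
| GateS of 'I_n
| GateH of 'I_n
| GateCX (c t : 'I_n) of c != t
| GateT of 'I_n
| GateZ of 'I_n & 'I_(2 ^ n) & bool.

Definition gate_op (R : realType) (n : nat) (alpha : 'I_(2 ^ n) -> R) (g : gate n)
  : qop R n :=
  match g with
  | GateS k => on1 k (Sgate R)
  | GateH k => on1 k (Hgate R)
  | GateCX c t _ => cxop R c t
  | GateT k => on1 k (Tgate R)
  | GateZ k j s => on1 k (if s then Zgate (alpha j) (alpha j)
                          else Zgate (- alpha j) (- alpha j))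
  end.

(* unitary of a circuit [g1; ...; gm] (g1 applied first) = G_m ... G_1 *)
Definition circuit_op (R : realType) (n : nat) (alpha : 'I_(2 ^ n) -> R)
  (gs : seq (gate n)) : qop R n :=
  foldl (fun U g => qmul (gate_op alpha g) U) (@qid R n) gs.

(* qubit basis state number j (standard ordering, first qubit most
   significant) viewed as a qutrit basis state with the same 0/1 labels *)
Definition qubit_state (n : nat) (j : 'I_(2 ^ n)) : trits n :=
  [ffun k : 'I_n => if odd (j %/ 2 ^ (n.-1 - k)) then 1%R else 0%R].

Definition emulates (R : realType) (n : nat) (V : qop R n) (U : 'M[R[i]]_(2 ^ n)) :=
  forall (j : 'I_(2 ^ n)) (x : trits n),
    V x (qubit_state j) = \sum_(i < 2 ^ n) (x == qubit_state i)%:R * U i j.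

(* All gates involved are monomial: they permute the basis states and multiply them by
   phases, and so does every circuit built from them.  Since H has entries omega^(ab)/sqrt 3
   and sum_v omega^(vN) vanishes unless 3 | N, conjugating by H on wire t a diagonal phase
   omega^(y_t m(y)), with m not depending on y_t, gives the permutation y_t |-> -y_t - m(y).
   With T = diag(zeta^(v^3)) for a primitive 9th root of unity zeta, this produces the
   reflections y_t |-> -y_t - a and, from the controlled phase CX T CX T CX T^7, the adder
   y_t |-> y_t + 2 y_c^2.  For each qubit basis state j, flip the wires on which j is 1, so
   that the input becomes zero exactly when it was |j>; the adders y_(k+1) += y_k^2 then make
   the last wire zero exactly when it was |j> (for a bit b, b + c^2 = 0 iff b = c = 0).
   Z(-alpha_j, -alpha_j) on that wire and Z(alpha_j, alpha_j) on a wire known to be nonzero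
   give the phase omega^alpha_j to |j> alone, and everything else is uncomputed.  The product
   of these circuits over j is the diagonal gate. *)

From mathcomp Require Import all_boot all_order all_algebra.
From mathcomp Require Import complex.
From mathcomp Require Import reals trigo.
From mathcomp Require Import ring lra.
Import Order.TTheory GRing.Theory Num.Theory.
Local Open Scope ring_scope.

Set Implicit Arguments.
Unset Strict Implicit.
Unset Printing Implicit Defensive.

Section RootsOfUnity.
Variable R : realType.
Local Notation omega := (omega R).

Lemma expiD (a b : R) : expi (a + b) = expi a * expi b.
Proof. by rewrite /expi cosD sinD; congr (_ +i* _)%C; ring. Qed.

Lemma wpowD (a b : R) : wpow (a + b) = wpow a * wpow b.
Proof. by rewrite /wpow -expiD mulrDr mulrDl. Qed.

Lemma wpow0 : wpow (0 : R) = 1.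
Proof. by rewrite /wpow /expi !mulr0 !mul0r cos0 sin0. Qed.

Lemma wpowMn (a : R) k : wpow (a *+ k) = wpow a ^+ k.
Proof. by elim: k => [|k IH]; rewrite ?mulr0n ?wpow0 // mulrS wpowD IH exprS. Qed.

Definition zeta : R[i] := wpow (1 / 3).

Lemma wpow_zeta (k : nat) : wpow (k%:R / 3) = zeta ^+ k.
Proof. by rewrite /zeta -wpowMn mulrnAl. Qed.

Lemma wpow3 : wpow (3 : R) = 1.
Proof.
rewrite /wpow /expi mulfK ?pnatr_eq0 //.
by rewrite mulr_natl cos2pi sin2pi.
Qed.

Lemma zeta9 : zeta ^+ 9 = 1.
Proof. by rewrite -wpow_zeta -[RHS]wpow3; congr wpow; field. Qed.

Lemma omega_zeta : omega = zeta ^+ 3.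
Proof. by rewrite -wpow_zeta /omega; congr wpow; field. Qed.

Lemma omega3 : omega ^+ 3 = 1.
Proof. by rewrite omega_zeta -exprM zeta9. Qed.

Lemma omega_expX3 (v : 'I_3) : omega ^+ (v ^ 3) = omega ^+ v.
Proof. by case: v => [[|[|[|//]]] ?] //; rewrite -(expr_mod _ omega3). Qed.

Lemma omega_neq1 : omega != 1.
Proof.
apply/eqP => /(congr1 (@complex.Im R)); rewrite /= mulr1 => sin_eq0.
have : 0 < sin (2 * pi / 3 : R).
  have pi_pos := @pi_gt0 R.
  by apply: sin_gt0_pi; apply/andP; split; lra.
by rewrite sin_eq0 ltxx.
Qed.

Lemma omega_prim : 3.-primitive_root omega.
Proof.
have [m prim_m m_dvd3] := prim_order_exists (isT : (0 < 3)%N) omega3.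
have [m1|m_neq1] := eqVneq m 1%N.
  move: prim_m; rewrite m1 => /prim_expr_order; rewrite expr1 => /eqP.
  by rewrite (negbTE omega_neq1).
by move/(prime_nt_dvdP (isT : prime 3) m_neq1): m_dvd3 => <-.
Qed.

Lemma sum_omega_expM N :
  \sum_(v < 3) omega ^+ (v * N) = if (3 %| N)%N then 3 else 0.
Proof.
under eq_bigr => v _ do rewrite mulnC exprM.
rewrite (prim_order_dvd omega_prim); case: ifP => [/eqP -> | omegaN_neq1].
  by under eq_bigr => v _ do rewrite expr1n; rewrite sumr_const card_ord.
have := expfS_eq1 (omega ^+ N) 2; rewrite -exprM mulnC exprM omega3 expr1n eqxx.
by rewrite omegaN_neq1 => /esym/eqP.
Qed.

End RootsOfUnity.

Lemma Z3_eq_dvd (a b : 'I_3) m : (a == - b - m%:R) = (3 %| a + m + b)%N.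
Proof.
rewrite -subr_eq0 (_ : a - (- b - m%:R) = (a + m + b)%N%:R); last first.
  by rewrite !natrD !natr_Zp; ring.
by rewrite Zp_nat -val_eqE.
Qed.

Lemma add_sqr_eq0 (b c : 'I_3) : (b < 2)%N -> (b + c ^+ 2 == 0) = (b == 0) && (c == 0).
Proof. by case: b c => [[|[|//]] ?] [[|[|[|//]]] ?]. Qed.

Lemma eq_from_bits N a b : (a < 2 ^ N)%N -> (b < 2 ^ N)%N ->
  (forall m, (m < N)%N -> odd (a %/ 2 ^ m) = odd (b %/ 2 ^ m)) -> a = b.
Proof.
elim: N a b => [|N IH] a b; first by rewrite !ltnS !leqn0 => /eqP-> /eqP->.
move=> a_lt b_lt bits_eq; rewrite (divn_eq a 2) (divn_eq b 2) !modn2.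
have := bits_eq 0%N isT; rewrite !divn1 => ->; congr (_ * _ + _)%N.
apply: IH; try by rewrite ltn_divLR // -expnSr.
by move=> m m_lt; rewrite -!divnMA -expnS; apply: bits_eq.
Qed.

Section MonomialCircuits.
Context {R : realType} {n : nat} {alpha : 'I_(2 ^ n) -> R}.
Local Notation circ := (circuit_op alpha).

Lemma sum_mul_eqr (F : trits n -> R[i]) a : \sum_z F z * (z == a)%:R = F a.
Proof.
rewrite (bigD1 a) //= eqxx mulr1 big1 ?addr0 // => z /negbTE->.
by rewrite mulr0.
Qed.

Lemma sum_eq_mull (F : trits n -> R[i]) a : \sum_z (a == z)%:R * F z = F a.
Proof. by rewrite -[RHS](sum_mul_eqr F); apply: eq_bigr => z _; rewrite mulrC eq_sym. Qed.

Lemma qmulE (A B : qop R n) x y : qmul A B x y = \sum_z A x z * B z y.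
Proof. by []. Qed.

Lemma circ_cat s1 s2 x y :
  circ (s1 ++ s2) x y = \sum_z circ s2 x z * circ s1 z y.
Proof.
rewrite /circuit_op foldl_cat; elim/last_ind: s2 x y => [|s2 g IH] x y /=.
  by rewrite /qid sum_eq_mull.
rewrite !foldl_rcons qmulE.
rewrite (eq_bigr _ (fun w _ => congr1 _ (IH w y))).
under eq_bigr => w _ do rewrite mulr_sumr.
under [RHS]eq_bigr => z _ do rewrite qmulE mulr_suml.
rewrite exchange_big; apply: eq_bigr => w _; apply: eq_bigr => z _.
by rewrite mulrA.
Qed.

Lemma circ1 g x y : circ [:: g] x y = gate_op alpha g x y.
Proof. by rewrite /circuit_op /= qmulE /qid sum_mul_eqr. Qed.

Definition monomial (V : qop R n) (f : trits n -> trits n) (p : trits n -> R[i]) :=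
  forall x y, V x y = (x == f y)%:R * p y.

Lemma eq_monomial V f p g q : monomial V f p -> f =1 g -> p =1 q -> monomial V g q.
Proof. by move=> Vfp fg pq x y; rewrite Vfp fg pq. Qed.

Lemma monomial_nil : monomial (circ [::]) id (fun=> 1).
Proof. by move=> x y; rewrite mulr1. Qed.

Lemma monomial_cat s1 s2 f p g q :
  monomial (circ s1) f p -> monomial (circ s2) g q ->
  monomial (circ (s1 ++ s2)) (g \o f) (fun y => q (f y) * p y).
Proof.
move=> s1fp s2gq x y; rewrite circ_cat.
under eq_bigr => z _ do rewrite s1fp mulrA.
by rewrite -mulr_suml sum_mul_eqr s2gq mulrA.
Qed.

Lemma monomial_conj U M U' f f' p :
  monomial (circ U) f (fun=> 1) -> monomial (circ U') f' (fun=> 1) -> cancel f f' ->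
  monomial (circ M) id p -> monomial (circ (U ++ M ++ U')) id (p \o f).
Proof.
move=> Uf U'f' fK Mp.
apply: eq_monomial (monomial_cat Uf (monomial_cat Mp U'f')) _ _ => y /=.
  by rewrite fK.
by rewrite mulr1 mul1r.
Qed.

Lemma monomial_foldr_conj (I : eqType) (U U' : I -> seq (gate n))
    (f f' : I -> trits n -> trits n) (ks : seq I) M p :
  (forall k, k \in ks -> [/\ monomial (circ (U k)) (f k) (fun=> 1),
     monomial (circ (U' k)) (f' k) (fun=> 1) & cancel (f k) (f' k)]) ->
  monomial (circ M) id p ->
  monomial (circ (foldr (fun k C => U k ++ C ++ U' k) M ks)) id
    (fun y => p (foldl (fun z k => f k z) y ks)).
Proof.
elim: ks p => [|k ks IH] p conjU Mp /=; first exact: eq_monomial Mp _ _.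
have [Uf U'f' fK] := conjU k (mem_head _ _).
apply: monomial_conj Uf U'f' fK (IH _ _ Mp) => k' k'_in.
by apply: conjU; rewrite in_cons k'_in orbT.
Qed.

Lemma monomial_flatten (I : Type) (C : I -> seq (gate n)) (p : I -> trits n -> R[i])
    (ks : seq I) :
  (forall k, monomial (circ (C k)) id (p k)) ->
  monomial (circ (flatten (map C ks))) id (fun y => \prod_(k <- ks) p k y).
Proof.
move=> Cp; elim: ks => [|k ks IH] /=.
  by apply: eq_monomial monomial_nil _ _ => // y; rewrite big_nil.
apply: eq_monomial (monomial_cat (Cp k) IH) _ _ => // y /=.
by rewrite big_cons mulrC.
Qed.

Lemma circ_cat_diag s1 M s2 p : monomial (circ M) id p ->
  forall x y, circ (s1 ++ M ++ s2) x y = \sum_z circ s2 x z * (p z * circ s1 z y).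
Proof.
move=> Mp x y; rewrite circ_cat; apply: eq_bigr => z _.
rewrite circ_cat; under eq_bigr => w _ do rewrite Mp /= mulrA.
by rewrite -mulr_suml sum_mul_eqr mulrA.
Qed.

End MonomialCircuits.

Section WireUpdates.
Variable n : nat.
Implicit Types (x y z : trits n) (k : 'I_n) (v : 'I_3).

Definition agree_off k x y := [forall j, (j != k) ==> (x j == y j)].

Definition upd y k v : trits n := [ffun j => if j == k then v else y j].

Lemma upd_same y k v : upd y k v k = v.
Proof. by rewrite ffunE eqxx. Qed.

Lemma upd_other y k v j : j != k -> upd y k v j = y j.
Proof. by rewrite ffunE => /negbTE->. Qed.

Lemma upd_upd y k v w : upd (upd y k v) k w = upd y k w.
Proof. by apply/ffunP => j; rewrite !ffunE; case: eqP. Qed.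

Lemma upd_id y k : upd y k (y k) = y.
Proof. by apply/ffunP => j; rewrite ffunE; case: eqP => [->|]. Qed.

Lemma agree_offC k x y : agree_off k x y = agree_off k y x.
Proof. by apply: eq_forallb => j; rewrite [x j == _]eq_sym. Qed.

Lemma agree_off_updr k x y v : agree_off k x (upd y k v) = agree_off k x y.
Proof. by apply: eq_forallb => j; rewrite ffunE; case: eqP. Qed.

Lemma eq_upd x y k v : (x == upd y k v) = agree_off k x y && (x k == v).
Proof.
apply/eqP/andP => [->|[/forallP agree /eqP <-]].
  by rewrite agree_offC agree_off_updr upd_same; split => //; apply/forallP => j; apply/implyP.
apply/ffunP => j; rewrite ffunE; case: eqP => [-> //|/eqP j_neq].
by apply/eqP; exact: implyP (agree j) j_neq.
Qed.

Lemma sum_agree_off (V : nmodType) (F : trits n -> V) x k :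
  \sum_(z | agree_off k x z) F z = \sum_v F (upd x k v).
Proof.
rewrite (partition_big (fun z => z k) predT) //=; apply: eq_bigr => v _.
by apply: big_pred1 => z; rewrite /= eq_upd agree_offC.
Qed.

Lemma foldl_upd_uniq (ks : seq 'I_n) (g : 'I_n -> 'I_3 -> 'I_3) y k : uniq ks ->
  foldl (fun z k => upd z k (g k (z k))) y ks k = if k \in ks then g k (y k) else y k.
Proof.
elim: ks y => [//|k' ks IH] y /= /andP[k'_notin ks_uniq].
rewrite IH // in_cons ffunE; case: (eqVneq k k') => [->|] //=.
by rewrite (negbTE k'_notin).
Qed.

End WireUpdates.

Section Gates.
Context {R : realType} {n : nat} {alpha : 'I_(2 ^ n) -> R}.
Local Notation circ := (circuit_op alpha).
Local Notation monomial := (@monomial R n).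
Local Notation omega := (omega R).
Local Notation zeta := (zeta R).
Implicit Types (k : 'I_n) (x y : trits n).

Lemma on1E k G x y : on1 k G x y = if agree_off k x y then G (x k) (y k) else 0 :> R[i].
Proof. by []. Qed.

Lemma on1_diag k (G : 'M[R[i]]_3) x y :
  is_diag_mx G -> on1 k G x y = (x == y)%:R * G (y k) (y k).
Proof.
move=> /is_diag_mxP Gdiag; rewrite on1E.
have [->|x_neq_y] := eqVneq x y.
  by rewrite mul1r; case: ifP => // /negbT /forallPn[j]; rewrite eqxx implybT.
rewrite mul0r; case: ifP => // agree; apply: Gdiag.
by apply: contra x_neq_y => xyk; rewrite -(upd_id y k) eq_upd agree.
Qed.

Lemma Zgate_diag (a b : R) : is_diag_mx (Zgate a b).
Proof. by apply/is_diag_mxP => i j ij; rewrite mxE ifN. Qed.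

Lemma monomial_T k : monomial (circ [:: GateT k]) id (fun y => zeta ^+ (y k ^ 3)).
Proof.
move=> x y; rewrite circ1 /= /Tgate on1_diag ?Zgate_diag // mxE eqxx; congr (_ * _).
case: (y k) => [[|[|[|//]]] ?] /=; rewrite ?expr0 ?expr1 //.
by rewrite -[LHS]mulr1 -(wpow3 R) -wpowD -wpow_zeta natrX; congr wpow; field.
Qed.

Definition Tpow k m : seq (gate n) := nseq m (GateT k).

Lemma monomial_Tpow k m :
  monomial (circ (Tpow k m)) id (fun y => zeta ^+ (m * y k ^ 3)).
Proof.
elim: m => [|m IH]; first by apply: eq_monomial monomial_nil _ _ => // y; rewrite mul0n.
apply: eq_monomial (monomial_cat (monomial_T k) IH) _ _ => // y /=.
by rewrite mulSn exprD mulrC.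
Qed.

Lemma monomial_CX c t (ct : c != t) : monomial (circ [:: GateCX ct]) (cxmap c t) (fun=> 1).
Proof. by move=> x y; rewrite circ1 mulr1. Qed.

Definition zphase (s : R) (v : 'I_3) : R[i] := if v == 0 then 1 else wpow s.

Lemma monomial_GateZ k j (b : bool) :
  monomial (circ [:: GateZ k j b]) id
    (fun y => zphase (if b then alpha j else - alpha j) (y k)).
Proof.
move=> x y; rewrite circ1 /= on1_diag; last by case: b; apply: Zgate_diag.
by congr (_ * _); case: b; rewrite mxE eqxx; case: (y k) => [[|[|[|//]]] ?].
Qed.

Lemma sum_on1_diag_on1 k (G G' : 'M[R[i]]_3) (p : trits n -> R[i]) x y :
  \sum_z on1 k G x z * (p z * on1 k G' z y) =
  if agree_off k x y then \sum_v G (x k) v * (p (upd y k v) * G' v (y k)) else 0.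
Proof.
transitivity (\sum_(z | agree_off k y z) on1 k G x z * (p z * G' (z k) (y k))).
  rewrite [RHS]big_mkcond; apply: eq_bigr => z _.
  by rewrite [on1 k G' z y]on1E agree_offC; case: ifP; rewrite ?mulr0.
rewrite sum_agree_off.
under eq_bigr => v _ do rewrite on1E agree_off_updr upd_same.
by case: ifP => _ //; rewrite big1 // => v _; rewrite mul0r.
Qed.

Lemma Hgate_conj_omega (a b : 'I_3) m :
  \sum_v Hgate R a v * (omega ^+ (v * m) * Hgate R v b) = (a == - b - m%:R)%:R.
Proof.
set c := ((Num.sqrt (3 : R))^-1)%:C%C.
have c2 : c * c * 3 = 1.
  rewrite -rmorphM /= -[3]/(3%:R) -(rmorph_nat (real_complex R)) -rmorphM /=.
  by rewrite -expr2 exprVn sqr_sqrtr ?mulVf ?pnatr_eq0.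
transitivity (c * c * \sum_(v < 3) omega ^+ (v * (a + m + b))).
  rewrite mulr_sumr; apply: eq_bigr => v _.
  by rewrite !mxE !mulnDr !exprD (mulnC a); ring.
by rewrite sum_omega_expM Z3_eq_dvd; case: ifP => _; rewrite ?c2 ?mulr0.
Qed.

Lemma monomial_H_conj t s (m : trits n -> nat) :
  (forall y v, m (upd y t v) = m y) ->
  monomial (circ s) id (fun y => omega ^+ (y t * m y)) ->
  monomial (circ (GateH t :: s ++ [:: GateH t]))
    (fun y => upd y t (- y t - (m y)%:R)) (fun=> 1).
Proof.
move=> m_upd sm x y.
rewrite -cat1s (circ_cat_diag _ _ sm).
under eq_bigr => z _ do rewrite !circ1 /=.
rewrite sum_on1_diag_on1 mulr1 eq_upd.
case: agree_off; rewrite ?mul0r //=.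
under eq_bigr => v _ do rewrite upd_same m_upd.
exact: Hgate_conj_omega.
Qed.

Definition negsub k a : seq (gate n) := GateH k :: Tpow k (3 * a) ++ [:: GateH k].

Lemma monomial_negsub k a :
  monomial (circ (negsub k a)) (fun y => upd y k (- y k - a%:R)) (fun=> 1).
Proof.
apply: (monomial_H_conj (m := fun=> a)) => // x y.
rewrite (monomial_Tpow k (3 * a) x y) -mulnA exprM -omega_zeta [(a * _)%N]mulnC.
by rewrite exprM omega_expX3 -exprM.
Qed.

Lemma negsubK k a : involutive (fun y => upd y k (- y k - a%:R)).
Proof. by move=> y; rewrite upd_upd upd_same -[RHS](upd_id y k); congr upd; ring. Qed.

Lemma cxmap_target c t y : cxmap c t y t = y c + y t.
Proof. by rewrite ffunE eqxx. Qed.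

Lemma cxmap_control c t y : c != t -> cxmap c t y c = y c.
Proof. by rewrite ffunE => /negbTE->. Qed.

Lemma cxmap3 c t y : c != t -> cxmap c t (cxmap c t (cxmap c t y)) = y.
Proof.
move=> ct; apply/ffunP => j; rewrite [LHS]ffunE; case: eqP => [->|/eqP jt].
  rewrite !cxmap_control // !cxmap_target !cxmap_control //.
  by apply/eqP; move: (y c) (y t); do 2!case => [[|[|[|//]]] ?].
by rewrite !ffunE (negbTE jt).
Qed.

(* The target runs through b + c, b + 2c, b, collecting
   zeta^((b + c)^3 + (b + 2c)^3 + 7 b^3) = omega^(2 b c^2). *)
Definition cphase c t (ct : c != t) : seq (gate n) :=
  [:: GateCX ct; GateT t; GateCX ct; GateT t; GateCX ct] ++ Tpow t 7.

Lemma monomial_cphase c t (ct : c != t) :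
  monomial (circ (cphase ct)) id (fun y => omega ^+ (y t * (2 * y c ^ 2))).
Proof.
have CX := monomial_CX ct; have T := monomial_T t.
apply: eq_monomial (monomial_cat CX (monomial_cat T (monomial_cat CX
  (monomial_cat T (monomial_cat CX (monomial_Tpow t 7)))))) _ _ => y /=.
  exact: cxmap3.
rewrite !mulr1 !cxmap_target !cxmap_control // omega_zeta -!exprM -!exprD.
rewrite -[LHS](expr_mod _ (zeta9 R)) -[RHS](expr_mod _ (zeta9 R)); congr (_ ^+ _).
by move: (y c) (y t); do 2!case => [[|[|[|//]]] ?].
Qed.

Definition sqadd c t (ct : c != t) : seq (gate n) :=
  (GateH t :: cphase ct ++ [:: GateH t]) ++ negsub t 0.

Lemma monomial_sqadd c t (ct : c != t) :
  monomial (circ (sqadd ct)) (fun y => upd y t (y t + y c ^+ 2 *+ 2)) (fun=> 1).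
Proof.
have H_cphase_H : monomial (circ (GateH t :: cphase ct ++ [:: GateH t]))
    (fun y => upd y t (- y t - (2 * y c ^ 2)%N%:R)) (fun=> 1).
  by apply: monomial_H_conj (monomial_cphase ct) => y v; rewrite upd_other.
apply: eq_monomial (monomial_cat H_cphase_H (monomial_negsub t 0)) _ _ => y /=.
  rewrite upd_upd upd_same; congr upd.
  by apply/eqP; move: (y c) (y t); do 2!case => [[|[|[|//]]] ?].
by rewrite mulr1.
Qed.

End Gates.

Section AndChain.
Context {n' : nat}.
Local Notation n := n'.+1.
Implicit Types (y z : trits n).

Definition wire (k : nat) : 'I_n := inord k.

Lemma val_wire k : (k <= n')%N -> val (wire k) = k.
Proof. exact: inordK. Qed.

Lemma eq_wire i k : (i <= n')%N -> (k <= n')%N -> (wire i == wire k) = (i == k).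
Proof. by move=> i_le k_le; rewrite -val_eqE /= !val_wire. Qed.

Lemma wire_succ_neq k : (k < n')%N -> wire k != wire k.+1.
Proof. by move=> k_lt; rewrite eq_wire ?(ltnW k_lt) // neq_ltn ltnSn. Qed.

Definition and_step (k : nat) y := upd y (wire k.+1) (y (wire k.+1) + y (wire k) ^+ 2).

Definition and_unstep (k : nat) y :=
  upd y (wire k.+1) (y (wire k.+1) + y (wire k) ^+ 2 *+ 2).

Lemma and_stepK k : (k < n')%N -> cancel (and_step k) (and_unstep k).
Proof.
move=> k_lt y; rewrite /and_unstep /and_step upd_upd upd_same upd_other; last first.
  exact: wire_succ_neq.
rewrite -[RHS](upd_id y (wire k.+1)); congr upd; apply/eqP.
by move: (y (wire k)) (y (wire k.+1)); do 2!case => [[|[|[|//]]] ?].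
Qed.

Definition and_prefix m y := foldl (fun z k => and_step k z) y (iota 0 m).

Lemma and_prefixS m y : and_prefix m.+1 y = and_step m (and_prefix m y).
Proof. by rewrite /and_prefix -[m.+1]addn1 iotaD foldl_cat. Qed.

Lemma and_prefix_wire y m i : (forall k, (y k < 2)%N) -> (m <= n')%N -> (i <= n')%N ->
  ((i <= m)%N -> (and_prefix m y (wire i) == 0) = all (fun k => y (wire k) == 0) (iota 0 i.+1))
  /\ ((m < i)%N -> and_prefix m y (wire i) = y (wire i)).
Proof.
move=> y_bits; elim: m i => [|m IH] i m_le i_le.
  by split=> // /[!leqn0] /eqP ->; rewrite /= andbT.
rewrite and_prefixS /and_step; have [-> | i_neq] := eqVneq i m.+1.
  rewrite upd_same (IH m.+1 (ltnW m_le) m_le).2 //; split => [_|]; last by rewrite ltnn.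
  rewrite add_sqr_eq0 // (IH m (ltnW m_le) (ltnW m_le)).1 //.
  by rewrite -[m.+2]addn1 iotaD all_cat /= add0n andbT andbC.
rewrite upd_other ?eq_wire //; have [IH_le IH_gt] := IH i (ltnW m_le) i_le.
split => [i_le_m1 | m1_lt]; last exact/IH_gt/ltnW.
by apply: IH_le; rewrite -ltnS ltn_neqAle i_neq.
Qed.

Definition and_chain := and_prefix n'.

Lemma and_chain_eq0 y : (forall k, (y k < 2)%N) ->
  (and_chain y (wire n') == 0) = [forall k, y k == 0].
Proof.
move=> y_bits; have [-> // _] := and_prefix_wire y_bits (leqnn n') (leqnn n').
apply/allP/forallP => [all0 k | all0 k _]; last exact: all0.
by rewrite -(inord_val k); apply: all0; rewrite mem_iota ltn_ord.
Qed.

End AndChain.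

Section PhaseOracle.
Context {R : realType} {n' : nat} {alpha : 'I_(2 ^ n'.+1) -> R}.
Local Notation n := n'.+1.
Local Notation circ := (circuit_op alpha).
Local Notation monomial := (@monomial R n).
Implicit Types (y : trits n) (j : 'I_(2 ^ n)).

(* Two adders add 4 y_c^2 = y_c^2 to the target; a third one restores it. *)
Definition and_gate (k : 'I_n') : seq (gate n) :=
  let ct := wire_succ_neq (ltn_ord k) in sqadd ct ++ sqadd ct.

Definition and_conj (M : seq (gate n)) : seq (gate n) :=
  foldr (fun k C => and_gate k ++ C ++ sqadd (wire_succ_neq (ltn_ord k))) M (enum 'I_n').

Lemma monomial_and_gate (k : 'I_n') : monomial (circ (and_gate k)) (and_step k) (fun=> 1).
Proof.
have ct := wire_succ_neq (ltn_ord k).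
apply: eq_monomial (monomial_cat (monomial_sqadd ct) (monomial_sqadd ct)) _ _ => y /=.
  rewrite upd_upd upd_same upd_other // /and_step; congr upd; apply/eqP.
  by move: (y (wire k)) (y (wire k.+1)); do 2!case => [[|[|[|//]]] ?].
by rewrite mulr1.
Qed.

Lemma monomial_and_conj M p :
  monomial (circ M) id p -> monomial (circ (and_conj M)) id (p \o and_chain).
Proof.
move=> Mp; apply: eq_monomial (monomial_foldr_conj (f := fun k : 'I_n' => and_step k)
  (f' := fun k : 'I_n' => and_unstep k) _ Mp) _ _ => // [k _ | y /=].
  split; [exact: monomial_and_gate | exact: monomial_sqadd | exact: and_stepK].
congr p; rewrite /and_chain /and_prefix -val_enum_ord.
by elim: (enum 'I_n') y => [//|k ks IH] y; exact: IH.
Qed.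

Definition flip_wires j := [seq k <- enum 'I_n | qubit_state j k == 1].

Definition flip_bits j y := foldl (fun z k => upd z k (- z k - 2%:R)) y (flip_wires j).

Lemma flip_bitsE j y k :
  flip_bits j y k = if qubit_state j k == 1 then - y k - 2%:R else y k.
Proof.
rewrite /flip_bits (foldl_upd_uniq (fun _ v => - v - 2%:R)) /flip_wires.
  by rewrite mem_filter mem_enum andbT.
by rewrite filter_uniq ?enum_uniq.
Qed.

Definition flip_conj j (M : seq (gate n)) : seq (gate n) :=
  foldr (fun k C => negsub k 2 ++ C ++ negsub k 2) M (flip_wires j).

Lemma monomial_flip_conj j M p :
  monomial (circ M) id p -> monomial (circ (flip_conj j M)) id (p \o flip_bits j).
Proof.
move=> Mp; apply: monomial_foldr_conj Mp => k _.
by split; [exact: monomial_negsub | exact: monomial_negsub | exact: negsubK].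
Qed.

(* Reflected by negsub _ 1, a bit on wire 0 is nonzero, so the first Z gate always
   contributes omega^alpha_j; the second cancels it unless the input is |j>. *)
Definition phase_gadget j : seq (gate n) :=
  (negsub (wire 0) 1 ++ [:: GateZ (wire 0) j true] ++ negsub (wire 0) 1) ++
  flip_conj j (and_conj [:: GateZ (wire n') j false]).

Definition gadget_phase j y :=
  zphase (- alpha j) (and_chain (flip_bits j y) (wire n')) * zphase (alpha j) (- y (wire 0) - 1).

Lemma monomial_phase_gadget j : monomial (circ (phase_gadget j)) id (gadget_phase j).
Proof.
apply: eq_monomial (monomial_cat
  (monomial_conj (monomial_negsub _ 1) (monomial_negsub _ 1) (negsubK _ 1)
    (monomial_GateZ (wire 0) j true))
  (monomial_flip_conj j (monomial_and_conj (monomial_GateZ (wire n') j false)))) _ _ => // y.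
by rewrite /= upd_same.
Qed.

Lemma qubit_state_inj : injective (@qubit_state n).
Proof.
move=> j0 j e; apply: val_inj; apply: (eq_from_bits (ltn_ord j0) (ltn_ord j)) => m m_lt.
have := congr1 (fun x : trits n => x (inord (n' - m))) e.
rewrite !ffunE inordK ?ltnS ?leq_subr // subKn; last by rewrite -ltnS.
by case: odd; case: odd.
Qed.

Lemma flip_bits_qubit_bit j0 j k : (flip_bits j (qubit_state j0) k < 2)%N.
Proof. by rewrite flip_bitsE !ffunE; case: odd; case: odd. Qed.

Lemma flip_bits_qubit_eq0 j0 j k :
  (flip_bits j (qubit_state j0) k == 0) = (qubit_state j0 k == qubit_state j k).
Proof. by rewrite flip_bitsE !ffunE; case: odd; case: odd. Qed.

Lemma gadget_phase_qubit j0 j :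
  gadget_phase j (qubit_state j0) = if j0 == j then wpow (alpha j) else 1.
Proof.
have shifted_neq0 : (- qubit_state j0 (wire 0) - 1 == 0) = false.
  by rewrite ffunE; case: odd.
have chain_eq0 : (and_chain (flip_bits j (qubit_state j0)) (wire n') == 0) = (j0 == j).
  rewrite and_chain_eq0 -?(inj_eq qubit_state_inj); last exact: flip_bits_qubit_bit.
  apply/forallP/eqP => [all0 | -> k]; last by rewrite flip_bits_qubit_eq0.
  by apply/ffunP => k; apply/eqP; rewrite -flip_bits_qubit_eq0.
rewrite /gadget_phase /zphase shifted_neq0 chain_eq0; case: eqP => _; first by rewrite mul1r.
by rewrite -wpowD addNr wpow0.
Qed.

End PhaseOracle.

Lemma emulates_diag (R : realType) n (V : qop R n) (d : 'rV[R[i]]_(2 ^ n)) :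
  (forall j x, V x (qubit_state j) = (x == qubit_state j)%:R * d 0 j) ->
  emulates V (diag_mx d).
Proof.
move=> Vd j x; rewrite Vd (bigD1 j) //= big1 => [|i i_neq]; last first.
  by rewrite mxE (negbTE i_neq) mulr0n mulr0.
by rewrite addr0 mxE eqxx mulr1n.
Qed.

Theorem mainTheorem2 (R : realType) (n : nat) (hn : (0 < n)%N)
  (alpha : 'I_(2 ^ n) -> R) :
  exists gs : seq (gate n),
    emulates (circuit_op alpha gs) (diag_mx (\row_j wpow (alpha j))).
Proof.
case: n hn alpha => [//|n'] _ alpha.
exists (flatten (map phase_gadget (enum 'I_(2 ^ n'.+1)))).
apply: emulates_diag => j0 x; rewrite (monomial_flatten _ monomial_phase_gadget) mxE.
under eq_bigr => j _ do rewrite gadget_phase_qubit.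
by rewrite -big_mkcond big_enum_cond (big_pred1 j0) // => j; rewrite eq_sym.
Qed.
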